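(* For every $\varphi\in\mathcal{L}_{AIL}$, the closure $cl(\varphi)$ is finite.
   Context: $\mathcal{L}_{AIL}$ over a countable set $\mathcal{P}$ of atoms and finite set $\mathcal{G}$ of agents: $\varphi::=p\mid\neg\varphi\mid\varphi\wedge\varphi\mid A_i\varphi\mid I_i\varphi\mid E_i\varphi\mid[\approx]_i\varphi\mid[\circ^+]_i\varphi$. $cl(\varphi)$ is the smallest set such that: (1) $\varphi\in cl(\varphi)$; (2) if $\psi\in cl(\varphi)$ then all subformulas of $\psi$ are in $cl(\varphi)$; (3) if $\psi\in cl(\varphi)$ and $\psi$ is not a negation, then $\neg\psi\in cl(\varphi)$; (4) if $A_i\psi\in cl(\varphi)$ then $A_i\chi\in cl(\varphi)$ for every subformula $\chi$ of $\psi$; (5) if $A_i\psi\in cl(\varphi)$ then $I_iA_i\psi$, $I_i\neg A_i\psi$, and $[\approx]_ip$ are in $cl(\varphi)$ for every atom $p$ that is a subformula of $\psi$; (6) if $I_i\psi\in cl(\varphi)$ and $\psi$ is of neither the form $I_i\chi$ nor $\neg I_i\chi$, then $I_iI_i\psi,I_i\neg I_i\psi\in cl(\varphi)$; (7) if $[\approx]_i\psi\in cl(\varphi)$ and $\psi$ is of neither the form $[\approx]_i\chi$ nor $\neg[\approx]_i\chi$, then $[\approx]_i[\approx]_i\psi,[\approx]_i\neg[\approx]_i\psi\in cl(\varphi)$; (8) if $[\circ^+]_i\psi\in cl(\varphi)$ then $[\approx]_iI_i[\circ^+]_i\psi\in cl(\varphi)$; (9) if $E_i\psi\in cl(\varphi)$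 then $A_i\psi,[\circ^+]_i\psi\in cl(\varphi)$. *)

From mathcomp Require Import all_boot.
From Stdlib Require Import List.

Set Implicit Arguments.
Unset Strict Implicit.

Section Syntax.
Variables (P : Type) (G : Type).

Inductive form : Type :=
| Atom  : P -> form
| Neg   : form -> form
| And   : form -> form -> form
| Aw    : G -> form -> form
| Iw    : G -> form -> form
| Ew    : G -> form -> form
| Sim   : G -> form -> form   (* [≈]_i *)
| Circ  : G -> form -> form.  (* [∘+]_i *)

Inductive isub : form -> form -> Prop :=
| isub_neg  : forall a, isub a (Neg a)
| isub_andl : forall a b, isub a (And a b)
| isub_andr : forall a b, isub b (And a b)
| isub_A    : forall i a, isub a (Aw i a)
| isub_I    : forall i a, isub a (Iw i a)
| isub_E    : forall i a, isub a (Ew i a)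
| isub_Sim  : forall i a, isub a (Sim i a)
| isub_Circ : forall i a, isub a (Circ i a).

Inductive subformula : form -> form -> Prop :=
| sub_refl : forall a, subformula a a
| sub_step : forall a b c, isub a b -> subformula b c -> subformula a c.

Inductive cl (phi : form) : form -> Prop :=
| cl1 : cl phi phi
| cl2 : forall psi chi, cl phi psi -> subformula chi psi -> cl phi chi
| cl3 : forall psi, cl phi psi -> (forall chi, psi <> Neg chi) -> cl phi (Neg psi)
| cl4 : forall i psi chi, cl phi (Aw i psi) -> subformula chi psi -> cl phi (Aw i chi)
| cl5a : forall i psi, cl phi (Aw i psi) -> cl phi (Iw i (Aw i psi))
| cl5b : forall i psi, cl phi (Aw i psi) -> cl phi (Iw i (Neg (Aw i psi)))
| cl5c : forall i psi p, cl phi (Aw i psi) -> subformula (Atom p) psi ->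
           cl phi (Sim i (Atom p))
| cl6a : forall i psi, cl phi (Iw i psi) ->
           (forall chi, psi <> Iw i chi) -> (forall chi, psi <> Neg (Iw i chi)) ->
           cl phi (Iw i (Iw i psi))
| cl6b : forall i psi, cl phi (Iw i psi) ->
           (forall chi, psi <> Iw i chi) -> (forall chi, psi <> Neg (Iw i chi)) ->
           cl phi (Iw i (Neg (Iw i psi)))
| cl7a : forall i psi, cl phi (Sim i psi) ->
           (forall chi, psi <> Sim i chi) -> (forall chi, psi <> Neg (Sim i chi)) ->
           cl phi (Sim i (Sim i psi))
| cl7b : forall i psi, cl phi (Sim i psi) ->
           (forall chi, psi <> Sim i chi) -> (forall chi, psi <> Neg (Sim i chi)) ->
           cl phi (Sim i (Neg (Sim i psi)))
| cl8 : forall i psi, cl phi (Circ i psi) -> cl phi (Sim i (Iw i (Circ i psi)))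
| cl9a : forall i psi, cl phi (Ew i psi) -> cl phi (Aw i psi)
| cl9b : forall i psi, cl phi (Ew i psi) -> cl phi (Circ i psi).

End Syntax.

Definition finite_set (T : Type) (S : T -> Prop) : Prop :=
  exists l : list T, forall x, S x -> List.In x l.

From Pilot Require Import Defs.
From mathcomp Require Import all_boot.
From Stdlib Require Import List.

Set Implicit Arguments.
Unset Strict Implicit.

(* Every formula of cl(φ) is a subformula of φ, a formula of one of twenty
   shapes built from an agent i and a subformula X of φ, or the negation of
   one of these.  The shapes are A_i X, [∘+]_i X, and the introspections
   M t, M M t, M ¬M t of t, for M = I_i with t ∈ {X, A_i X, ¬A_i X, [∘+]_i X}
   and for M = [≈]_i with t ∈ {X, I_i [∘+]_i X}.  This set is closed under
   subformulas and under every clause of cl; the side conditions of clauses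
   (6) and (7) are what stop the towers of I_i and [≈]_i after two levels.
   There are finitely many agents and subformulas, so the set is finite. *)

Section Subformulas.
Variables (P G : Type).
Notation form := (Defs.form P G).
Implicit Types (a b c : form).

Lemma subformula_trans a b c : subformula a b -> subformula b c -> subformula a c.
Proof. by elim=> // a' b' c' ab' _ IH /IH; apply: sub_step. Qed.

Fixpoint subformulas c : list form :=
  c :: match c with
       | Atom _ => [::]
       | And a b => (subformulas a ++ subformulas b)%list
       | Neg a | Aw _ a | Iw _ a | Ew _ a | Sim _ a | Circ _ a => subformulas a
       end.

Lemma subformulas_self c : In c (subformulas c).
Proof. by case: c; left. Qed.

Lemma subformulas_isub c a b : In b (subformulas c) -> isub a b -> In a (subformulas c).
Proof.
elim: c => [p|c IH|c1 IH1 c2 IH2|i c IH|i c IH|i c IH|i c IH|i c IH] /= [<-|Hb] ab;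
  try by inversion ab; subst; right; rewrite ?in_app_iff; auto using subformulas_self.
all: right; rewrite ?in_app_iff in Hb *; intuition.
Qed.

Lemma In_subformulas a b : subformula a b -> In a (subformulas b).
Proof.
elim=> [c|a' b' c ab _ IH]; first exact: subformulas_self.
exact: subformulas_isub IH ab.
Qed.

End Subformulas.

Section Bound.
Variables (P G : Type).
Notation form := (Defs.form P G).
Implicit Types (f g t X : form) (i : G).

Definition introspection (M : form -> form) t : list form :=
  [:: M t; M (M t); M (Neg (M t))].

Definition Iw_targets i X : list form := [:: X; Aw i X; Neg (Aw i X); Circ i X].

Definition Sim_targets i X : list form := [:: X; Iw i (Circ i X)].

Definition modal_shapes i X : list form :=
  Aw i X :: Circ i X ::
  (flat_map (introspection (Iw i)) (Iw_targets i X) ++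
   flat_map (introspection (Sim i)) (Sim_targets i X))%list.

Variable phi : form.

Definition cl_core f :=
  subformula f phi \/ exists i X, subformula X phi /\ In f (modal_shapes i X).

Definition cl_bound f := cl_core f \/ exists g, cl_core g /\ f = Neg g.

Lemma cl_core_Iw_introspection i X t f :
  subformula X phi -> In t (Iw_targets i X) -> In f (introspection (Iw i) t) -> cl_core f.
Proof.
move=> HX Ht Hf; right; exists i, X; split=> //.
by do 2 right; apply/in_app_iff; left; apply/in_flat_map; exists t.
Qed.

Lemma cl_core_Sim_introspection i X t f :
  subformula X phi -> In t (Sim_targets i X) -> In f (introspection (Sim i) t) -> cl_core f.
Proof.
move=> HX Ht Hf; right; exists i, X; split=> //.
by do 2 right; apply/in_app_iff; right; apply/in_flat_map; exists t.
Qed.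

Lemma cl_bound_shape i X f : subformula X phi -> In f (modal_shapes i X) -> cl_bound f.
Proof. by move=> HX Hf; left; right; exists i, X. Qed.

Ltac in_list := simpl; repeat first [left; reflexivity | right]; fail.

Lemma cl_bound_isub f g : cl_bound g -> isub f g -> cl_bound f.
Proof.
move=> [[Hg | [i [X [HX Hg]]]] | [g' [[Hg' | [i [X [HX Hg']]]] ->]]] fg.
- by left; left; apply: sub_step fg Hg.
- simpl in Hg; repeat destruct Hg as [<- | Hg]; try contradiction;
    inversion fg; subst;
    first [ by left; left
          | by apply: (cl_bound_shape (i := i) HX); in_list
          | by right; eexists; split; [|reflexivity]; right; exists i, X; split; [|in_list] ].
- by inversion fg; subst; left; left.
- by inversion fg; subst; left; right; exists i, X.
Qed.

Lemma cl_bound_subformula f g : subformula f g -> cl_bound g -> cl_bound f.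
Proof. by elim=> // f' g' h fg _ IH /IH /cl_bound_isub; apply. Qed.

Ltac invert_cl_bound H Hsub :=
  let Hin := fresh "Hin" in
  destruct H as [[Hsub | (? & ? & ? & Hin)] | (? & _ & Hin)];
  [ | simpl in Hin; repeat destruct Hin as [Hin | Hin]; try contradiction;
      inversion Hin; subst
    | discriminate ].

Lemma cl_bound_Aw i psi : cl_bound (Aw i psi) -> subformula psi phi.
Proof. by move=> H; invert_cl_bound H Hsub => //; apply: sub_step (isub_A _ _) Hsub. Qed.

Lemma cl_bound_Circ i psi : cl_bound (Circ i psi) -> subformula psi phi.
Proof. by move=> H; invert_cl_bound H Hsub => //; apply: sub_step (isub_Circ _ _) Hsub. Qed.

Lemma cl_bound_Ew i psi : cl_bound (Ew i psi) -> subformula psi phi.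
Proof. by move=> H; invert_cl_bound H Hsub; apply: sub_step (isub_E _ _) Hsub. Qed.

Lemma cl_bound_Iw i psi :
  cl_bound (Iw i psi) ->
  (forall chi, psi <> Iw i chi) -> (forall chi, psi <> Neg (Iw i chi)) ->
  exists2 X, subformula X phi & In psi (Iw_targets i X).
Proof.
move=> H notI notNI; invert_cl_bound H Hsub;
  try by [exfalso; apply: notI | exfalso; apply: notNI].
- by exists psi; [apply: sub_step (isub_I _ _) Hsub | left].
all: by eexists; [eassumption | in_list].
Qed.

Lemma cl_bound_Sim i psi :
  cl_bound (Sim i psi) ->
  (forall chi, psi <> Sim i chi) -> (forall chi, psi <> Neg (Sim i chi)) ->
  exists2 X, subformula X phi & In psi (Sim_targets i X).
Proof.
move=> H notS notNS; invert_cl_bound H Hsub;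
  try by [exfalso; apply: notS | exfalso; apply: notNS].
- by exists psi; [apply: sub_step (isub_Sim _ _) Hsub | left].
all: by eexists; [eassumption | in_list].
Qed.

Lemma cl_sub_cl_bound f : cl phi f -> cl_bound f.
Proof.
elim=> {f} [| psi chi _ IH sub | psi _ IH notNeg | i psi chi _ /cl_bound_Aw IH sub
  | i psi _ /cl_bound_Aw IH | i psi _ /cl_bound_Aw IH | i psi p _ /cl_bound_Aw IH sub
  | i psi _ IH notI notNI | i psi _ IH notI notNI | i psi _ IH notS notNS
  | i psi _ IH notS notNS | i psi _ /cl_bound_Circ IH | i psi _ /cl_bound_Ew IH
  | i psi _ /cl_bound_Ew IH].
- by left; left; apply: Defs.sub_refl.
- exact: cl_bound_subformula sub IH.
- case: IH => [Hpsi | [g [_ Hg]]]; last by case: (notNeg g).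
  by right; exists psi.
- by apply: (cl_bound_shape (i := i) (subformula_trans sub IH)); in_list.
- by apply: (cl_bound_shape (i := i) IH); in_list.
- by apply: (cl_bound_shape (i := i) IH); in_list.
- by apply: (cl_bound_shape (i := i) (subformula_trans sub IH)); in_list.
- have [X HX Hpsi] := cl_bound_Iw IH notI notNI.
  by left; apply: (cl_core_Iw_introspection HX Hpsi); in_list.
- have [X HX Hpsi] := cl_bound_Iw IH notI notNI.
  by left; apply: (cl_core_Iw_introspection HX Hpsi); in_list.
- have [X HX Hpsi] := cl_bound_Sim IH notS notNS.
  by left; apply: (cl_core_Sim_introspection HX Hpsi); in_list.
- have [X HX Hpsi] := cl_bound_Sim IH notS notNS.
  by left; apply: (cl_core_Sim_introspection HX Hpsi); in_list.
- by apply: (cl_bound_shape (i := i) IH); in_list.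
- by apply: (cl_bound_shape (i := i) IH); in_list.
- by apply: (cl_bound_shape (i := i) IH); in_list.
Qed.

End Bound.

Lemma finite_set_sub (T : Type) (S S' : T -> Prop) :
  (forall x, S x -> S' x) -> finite_set S' -> finite_set S.
Proof. by move=> SS' [l Hl]; exists l => x /SS' /Hl. Qed.

Lemma In_mem (T : eqType) (x : T) (s : list T) : x \in s -> In x s.
Proof. by elim: s => //= y s IH; rewrite inE => /orP [/eqP ->|/IH]; auto. Qed.

Lemma cl_bound_finite (P : Type) (G : finType) (phi : form P G) :
  finite_set (cl_bound phi).
Proof.
pose L := (subformulas phi ++
  flat_map (fun i => flat_map (modal_shapes i) (subformulas phi)) (enum G))%list.
have In_L f : cl_core phi f -> In f L.
  case=> [Hf | [i [X [HX Hf]]]]; apply/in_app_iff; [left | right].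
    exact: In_subformulas.
  apply/in_flat_map; exists i; split; first by apply/In_mem; rewrite mem_enum.
  by apply/in_flat_map; exists X; split; first exact: In_subformulas.
exists (L ++ map (@Neg P G) L)%list => f Hf; apply/in_app_iff.
case: Hf => [/In_L | [g [/In_L Hg ->]]]; first by left.
by right; apply: in_map.
Qed.

Theorem lemma5 (P : countType) (G : finType) (phi : form P G) :
  finite_set (cl phi).
Proof. exact: finite_set_sub (@cl_sub_cl_bound _ _ phi) (cl_bound_finite phi). Qed.
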